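(* Under the full-support assumption and with $\eta L<\tfrac12$, for every $t\ge1$, \[ \langle\log\hat{\bm\pi}^{(t+1)}-\log{\bm\pi}^*,\eta\bm P\hat{\bm\pi}^{(t)}-\eta\bm P\hat{\bm\pi}^{(t+1)}\rangle\ge-\frac{(e^{2\eta L}-1)(e^{\eta L}+1)}{2\varepsilon}|\mathbb{A}|(\Theta_{t+1}+2e^{-1})\hat K^{(t+1)}. \]
   Context: $\mathbb{A}$ finite, $\Delta(\mathbb{A})$ the simplex, $\bm P$ skew-symmetric, $L=\max_{a,a'}|P_{a,a'}|$. $\mathbb{M}$: Nash equilibria, i.e. ${\bm\pi}\in\Delta(\mathbb{A})$ with $\max_a(\bm P{\bm\pi})_a\le0$. Full-support assumption: every $a$ has some ${\bm\pi}\in\mathbb{M}$ with $\pi_a>0$. $p({\bm\pi})=\arg\min_{{\bm\pi}'\in\mathbb{M}}D_{\mathrm{KL}}({\bm\pi}'\|{\bm\pi})$ for positive ${\bm\pi}$. OMWU with $\eta>0$: $\hat{\bm\pi}^{(1)}$ positive, ${\bm\pi}^{(0)}=\hat{\bm\pi}^{(1)}$, for $t\ge1$ $\pi^{(t)}_a\propto\hat\pi^{(t)}_a e^{\eta(\bm P{\bm\pi}^{(t-1)})_a}$, $\hat\pi^{(t+1)}_a\propto\hat\pi^{(t)}_a e^{\eta(\bm P{\bm\pi}^{(t)})_a}$ (normalized). ${\bm\pi}^*=p(\hat{\bm\pi}^{(1)})$, $\varepsilon=\min_a\pi^*_a$. $\Theta_t=D_{\mathrm{KL}}({\bm\pi}^*\|\hat{\bm\pi}^{(t)})+4\eta^2L^2D_{\mathrm{KL}}(\hat{\bm\pi}^{(t)}\|{\bm\pi}^{(t-1)})$.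 $\hat K^{(t+1)}=\max_a\hat\pi^{(t)}_a|\eta(\bm P{\bm\pi}^{(t)})_a|$. Logarithms are componentwise. *)

From mathcomp Require Import all_boot all_order all_algebra.
From mathcomp Require Import all_classical all_reals.
From mathcomp Require Import all_analysis.
Set Implicit Arguments. Unset Strict Implicit. Unset Printing Implicit Defensive.
Import Order.TTheory GRing.Theory Num.Theory.
Local Open Scope ring_scope.

Section OMWU.
Variables (R : realType) (A : finType).

Definition matvec (P : A -> A -> R) (v : A -> R) : A -> R :=
  fun a => \sum_(b : A) P a b * v b.

Definition skew_sym (P : A -> A -> R) : Prop := forall a b, P a b = - P b a.

Definition Lmax (P : A -> A -> R) : R :=
  \big[Num.max/0]_(a : A) \big[Num.max/0]_(b : A) `|P a b|.

Definition in_simplex (p : A -> R) : Prop :=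
  (forall a, 0 <= p a) /\ \sum_(a : A) p a = 1.

Definition nash (P : A -> A -> R) (p : A -> R) : Prop :=
  in_simplex p /\ forall a, matvec P p a <= 0.

Definition full_support (P : A -> A -> R) : Prop :=
  forall a, exists p, nash P p /\ 0 < p a.

(* KL divergence, with the convention 0 log 0 = 0 (ln 0 = 0 in mathcomp). *)
Definition KL (p q : A -> R) : R := \sum_(a : A) p a * ln (p a / q a).

Definition is_KL_proj (P : A -> A -> R) (q pistar : A -> R) : Prop :=
  nash P pistar /\ forall p', nash P p' -> KL pistar q <= KL p' q.

Definition normalize (w : A -> R) : A -> R := fun a => w a / \sum_(b : A) w b.

Definition mwu_step (eta : R) (P : A -> A -> R) (base g : A -> R) : A -> R :=
  normalize (fun a => base a * expR (eta * matvec P g a)).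

(* omwu_state n = (pihat^(n+1), pi^(n)) *)
Fixpoint omwu_state (eta : R) (P : A -> A -> R) (pihat1 : A -> R) (n : nat)
  : (A -> R) * (A -> R) :=
  match n with
  | 0%N => (pihat1, pihat1)
  | n'.+1 =>
      let s := omwu_state eta P pihat1 n' in
      let pit := mwu_step eta P s.1 s.2 in
      (mwu_step eta P s.1 pit, pit)
  end.

(* pihat^(t) for t >= 1 *)
Definition pihat (eta : R) P pihat1 (t : nat) : A -> R :=
  (omwu_state eta P pihat1 t.-1).1.
Definition piseq (eta : R) P pihat1 (t : nat) : A -> R :=
  (omwu_state eta P pihat1 t).2.

Definition Theta (eta : R) P pihat1 (pistar : A -> R) (t : nat) : R :=
  KL pistar (pihat eta P pihat1 t)
  + 4 * eta ^+ 2 * Lmax P ^+ 2 * KL (pihat eta P pihat1 t) (piseq eta P pihat1 t.-1).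

Definition Khat_succ (eta : R) P pihat1 (t : nat) : R :=
  \big[Num.max/0]_(a : A)
     (pihat eta P pihat1 t a * `|eta * matvec P (piseq eta P pihat1 t) a|).

(* epsilon = min_a pistar_a (entries of a simplex point are <= 1) *)
Definition min_entry (p : A -> R) : R := \big[Num.min/1]_(a : A) p a.

End OMWU.

From mathcomp Require Import all_boot all_order all_algebra.
From mathcomp Require Import all_classical all_reals.
From mathcomp Require Import all_analysis.
From mathcomp Require Import ring lra.
Set Implicit Arguments. Unset Strict Implicit. Unset Printing Implicit Defensive.
Import Order.TTheory GRing.Theory Num.Theory.
Local Open Scope ring_scope.

(* Put [x := eta L], [delta := eta P (pihat^(t) - pihat^(t+1))] and
   [c := (e^(2x) - 1)(e^x + 1)].  Each summand of the left-hand side is at least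
   [- |log pihat^(t+1)_a - log pistar_a| * max_b |delta_b|], so it suffices to
   bound the two factors.
   - Full support forces the KL projection [pistar] to be interior, so
     [eps * sum_a |log pihat_a - log pistar_a| <= KL(pistar || pihat) + 2/e]:
     the entries where [pihat_a > pistar_a] contribute at most [1/e] by the
     log-sum inequality, and [KL(pistar || pihat) <= Theta] by Gibbs.
   - [pihat^(t+1)] is [pihat^(t)] reweighted by [e^(g_a)] with [|g_a| <= x],
     hence [max_b |delta_b| <= x |pihat^(t) - pihat^(t+1)|_1
     <= 2 e^x (e^x - 1) sum_a pihat^(t)_a |g_a| <= c / 2 * |A| * Khat]. *)

Section RealFacts.
Variable R : realType.
Implicit Types x y w g q t : R.

Lemma ln_le_subr1 y : 0 < y -> ln y <= y - 1.
Proof.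
move=> y0; have := @le_ln1Dx R (y - 1); rewrite [1 + _]addrC subrK; apply; lra.
Qed.

Lemma ln_le_mulr_expRN1 y : 0 < y -> ln y <= y * expR (-1).
Proof.
move=> y0; have := @ln_le_subr1 _ (mulr_gt0 y0 (expR_gt0 (-1))).
rewrite lnM ?posrE ?expR_gt0 // expRK; lra.
Qed.

Lemma subr_le_mul_lnB x w : 0 <= x -> 0 < w -> x - w <= x * (ln x - ln w).
Proof.
move=> x0 w0; have [->|xn0] := eqVneq x 0; first by rewrite mul0r; lra.
have xp : 0 < x by rewrite lt_def xn0 x0.
have := @ln_le_subr1 _ (divr_gt0 w0 xp); rewrite ln_div ?posrE // => h.
have := ler_wpM2l x0 h.
have -> : x * (w / x - 1) = w - x by field; rewrite gt_eqF.
lra.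
Qed.

Lemma mul_ln_divE x q : 0 <= x -> 0 < q -> x * ln (x / q) = x * (ln x - ln q).
Proof.
move=> x0 q0; have [->|xn0] := eqVneq x 0; first by rewrite !mul0r.
by rewrite ln_div // posrE lt_def xn0 x0.
Qed.

(* Sum the tangent-line bounds [subr_le_mul_lnB] taken at the mixture point. *)
Lemma mul_lnB_convex x y q t : 0 <= x -> 0 <= y -> 0 < q -> 0 < t -> t < 1 ->
  ((1 - t) * x + t * y) * (ln ((1 - t) * x + t * y) - ln q)
  <= (1 - t) * (x * (ln x - ln q)) + t * (y * (ln y - ln q)).
Proof.
move=> x0 y0 q0 t0 t1; have t1' : 0 < 1 - t by lra.
set w := (1 - t) * x + t * y.
have w0 : 0 <= w by rewrite addr_ge0 // mulr_ge0 // ltW.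
have [wE|wn0] := eqVneq w 0.
  have : (1 - t) * x + t * y == 0 by exact/eqP.
  rewrite paddr_eq0 ?mulr_ge0 // ?(ltW t1') ?(ltW t0) // => /andP[/eqP xE /eqP yE].
  by rewrite wE mul0r !mulrA xE yE !mul0r addr0.
have wp : 0 < w by rewrite lt_def wn0 w0.
have hx := ler_wpM2l (ltW t1') (subr_le_mul_lnB x0 wp).
have hy := ler_wpM2l (ltW t0) (subr_le_mul_lnB y0 wp).
have -> : (1 - t) * (x * (ln x - ln q)) + t * (y * (ln y - ln q)) =
  (1 - t) * (x * (ln x - ln w)) + t * (y * (ln y - ln w)) + w * (ln w - ln q).
  by rewrite /w; ring.
have : (1 - t) * (x - w) + t * (y - w) = 0 by rewrite /w; ring.
lra.
Qed.

Lemma mulr_norm_expRB1_le x g :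
  `|g| <= x -> x * `|expR g - 1| <= (expR x - 1) * `|g|.
Proof.
move=> gx; have [g0|g0] := leP 0 g.
- rewrite ger0_norm in gx *; last exact: g0.
  rewrite ger0_norm; last by rewrite subr_ge0 leNgt expR_lt1 -leNgt.
  have eg := expR_gt0 g.
  have h1 : expR g * (1 - g) <= 1.
    have := ler_wpM2r (ltW eg) (expR_ge1Dx (- g)).
    by rewrite expRN mulVf ?gt_eqF // mulrC.
  have h2 : expR g * (1 + (x - g)) <= expR x.
    have := ler_wpM2l (ltW eg) (expR_ge1Dx (x - g)).
    by rewrite expRB [expR g * (_ / _)]mulrC divfK ?gt_eqF.
  have := mulr_ge0 (eqbRL (subr_ge0 _ _) gx) (eqbRL (subr_ge0 _ _) h1).
  have := mulr_ge0 g0 (eqbRL (subr_ge0 _ _) h2).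
  nra.
- rewrite ltr0_norm // in gx *; rewrite ltr0_norm; last first.
    by rewrite subr_lt0 expR_lt1.
  have := expR_ge1Dx g; have := expR_ge1Dx x.
  nra.
Qed.

Lemma expR_gap_le x : 0 <= x ->
  2 * expR x * (expR x - 1) <= (expR (2 * x) - 1) * (expR x + 1) / 2.
Proof.
move=> x0; have u : 0 <= expR x - 1 by have := expR_ge1Dx x; lra.
have -> : expR (2 * x) = expR x * expR x by rewrite -expRD -mulr2n mulr_natl.
have := mulr_ge0 u (mulr_ge0 u u); nra.
Qed.

End RealFacts.

Section Distributions.
Variables (R : realType) (A : finType).
Implicit Types (p q m v w : A -> R) (P : A -> A -> R).

Definition pos_dist v := (forall a, 0 < v a) /\ \sum_a v a = 1.

Lemma pos_dist_simplex v : pos_dist v -> in_simplex v.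
Proof. by case=> v0 v1; split=> // a; exact: ltW. Qed.

Lemma normalize_pos_dist (a0 : A) w : (forall a, 0 < w a) -> pos_dist (normalize w).
Proof.
move=> w0; have S0 : 0 < \sum_a w a.
  by rewrite (bigD1 a0) //= ltr_pwDl // sumr_ge0 // => a _; exact: ltW.
split=> [a|]; first by rewrite divr_gt0.
by rewrite -mulr_suml divff // gt_eqF.
Qed.

Lemma mwu_step_pos_dist (a0 : A) eta P base g :
  (forall a, 0 < base a) -> pos_dist (mwu_step eta P base g).
Proof. by move=> b0; apply: (normalize_pos_dist a0) => a; rewrite mulr_gt0 ?expR_gt0. Qed.

Lemma omwu_state_pos_dist (a0 : A) eta P p1 n : pos_dist p1 ->
  pos_dist (omwu_state eta P p1 n).1 /\ pos_dist (omwu_state eta P p1 n).2.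
Proof.
move=> p1_pos; elim: n => [|n [[hat0 _] _]] //=.
by split; apply: (mwu_step_pos_dist a0).
Qed.

Lemma pihat_succE eta P p1 t :
  pihat eta P p1 t.+2 = mwu_step eta P (pihat eta P p1 t.+1) (piseq eta P p1 t.+1).
Proof. by []. Qed.

Lemma KL_ge0 p q : pos_dist p -> pos_dist q -> 0 <= KL p q.
Proof.
move=> [p0 p1] [q0 q1].
apply: (@le_trans _ _ (\sum_a (p a - q a))); first by rewrite sumrB p1 q1 subrr.
apply: ler_sum => a _; rewrite ln_div ?posrE //.
exact: subr_le_mul_lnB (ltW (p0 a)) (q0 a).
Qed.

Definition mix t p m a := (1 - t) * p a + t * m a.

Lemma nash_mix P t p m : 0 < t -> t < 1 -> nash P p -> nash P m -> nash P (mix t p m).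
Proof.
move=> t0 t1 [[p0 p1] pP] [[m0 m1] mP]; split; first split.
- by move=> a; rewrite addr_ge0 // mulr_ge0 // ltW // subr_gt0.
- by rewrite big_split /= -!mulr_sumr p1 m1 !mulr1 subrK.
move=> a; rewrite /matvec.
rewrite (eq_bigr (fun b => (1 - t) * (P a b * p b) + t * (P a b * m b))); last first.
  by move=> b _; rewrite /mix; ring.
rewrite big_split /= -!mulr_sumr.
have := pP a; have := mP a; rewrite /matvec; nra.
Qed.

(* Mixing a little of [m] into a [p] with [p a0 = 0] gains the term
   [t m_a0 ln t], which is of order [t ln t] and beats the linear cost. *)
Lemma KL_mix_le (a0 : A) t p m q : 0 < t -> t < 1 ->
  (forall a, 0 <= p a) -> (forall a, 0 <= m a) -> (forall a, 0 < q a) ->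
  p a0 = 0 -> 0 < m a0 ->
  KL (mix t p m) q <= (1 - t) * KL p q + t * KL m q + t * m a0 * ln t.
Proof.
move=> t0 t1 p0 m0 q0 pa0 ma0.
have r0 a : 0 <= mix t p m a by rewrite addr_ge0 // mulr_ge0 // ltW // subr_gt0.
rewrite /KL !mulr_sumr -big_split /= (bigD1 a0) //= [X in _ <= X + _](bigD1 a0) //=.
have : \sum_(a | a != a0) mix t p m a * ln (mix t p m a / q a) <=
    \sum_(a | a != a0) ((1 - t) * (p a * ln (p a / q a)) + t * (m a * ln (m a / q a))).
  by apply: ler_sum => a _; rewrite !mul_ln_divE //; exact: mul_lnB_convex.
rewrite !mul_ln_divE // /mix pa0 mulr0 mul0r mulr0 !add0r lnM ?posrE //; lra.
Qed.

Lemma KL_proj_pos P q p : (forall a, 0 < q a) -> full_support P ->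
  is_KL_proj P q p -> forall a, 0 < p a.
Proof.
move=> q0 fs [pN pmin] a0; have [[p0 _] _] := pN.
have [pa0|] := eqVneq (p a0) 0; last by rewrite lt_def p0 => ->.
have [m [mN ma0]] := fs a0; have [[m0 _] _] := mN.
pose c := `|KL m q - KL p q| + 1.
have c0 : 0 < c by rewrite ltr_pwDr.
pose t := expR (- (c / m a0)).
have t0 : 0 < t by rewrite expR_gt0.
have t1 : t < 1 by rewrite expR_lt1 oppr_lt0 divr_gt0.
have := pmin _ (nash_mix t0 t1 pN mN).
have := KL_mix_le t0 t1 p0 m0 q0 pa0 ma0.
have -> : t * m a0 * ln t = - (t * c) by rewrite expRK; field; rewrite gt_eqF.
have : KL m q - KL p q <= `|KL m q - KL p q| := ler_norm _.
have : 0 < t * c by rewrite mulr_gt0.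
rewrite /c; nra.
Qed.

(* Log-sum inequality on [S := {a | p a < q a}] optimised over the scale [lam],
   then [pS ln (1 / pS) <= 1/e]. *)
Lemma sum_lnB_pos_le p q : pos_dist p -> pos_dist q ->
  \sum_(a | ln (p a) < ln (q a)) p a * (ln (q a) - ln (p a)) <= expR (-1).
Proof.
move=> [p0 _] [q0 q1]; set S := fun a => ln (p a) < ln (q a).
pose pS := \sum_(a | S a) p a; pose qS := \sum_(a | S a) q a.
have pS0 : 0 <= pS by apply: sumr_ge0 => a _; exact: ltW.
have qS0 : 0 <= qS by apply: sumr_ge0 => a _; exact: ltW.
have qS1 : qS <= 1.
  rewrite -q1 /qS big_mkcond /=; apply: ler_sum => a _.
  by case: ifP => _ //; exact: ltW.
have scaled lam : 0 < lam ->
    \sum_(a | S a) p a * (ln (q a) - ln (p a)) <= qS / lam - pS + pS * ln lam.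
  move=> lam0; rewrite /qS /pS mulr_suml mulr_suml -sumrB -big_split /=.
  apply: ler_sum => a _; have qa0 := divr_gt0 (q0 a) lam0.
  have := subr_le_mul_lnB (ltW (p0 a)) qa0.
  rewrite ln_div ?posrE //; lra.
have [pSE|pSn0] := eqVneq pS 0.
  apply: le_trans (scaled _ (expR_gt0 1)) _.
  by rewrite pSE mul0r subr0 addr0 -expRN ler_piMl ?expR_ge0.
have pSp : 0 < pS by rewrite lt_def pSn0 pS0.
apply: le_trans (scaled _ (eqbRL (invr_gt0 pS) pSp)) _; rewrite invrK.
have := ler_wpM2l pS0 (ln_le_mulr_expRN1 (eqbRL (invr_gt0 pS) pSp)).
rewrite mulrA mulfV ?mul1r //.
have : qS * pS <= pS by rewrite ler_piMl.
lra.
Qed.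

Lemma sum_norm_lnB_le_KL p q eps : pos_dist p -> pos_dist q ->
  (forall a, eps <= p a) ->
  eps * \sum_a `|ln (q a) - ln (p a)| <= KL p q + 2 * expR (-1).
Proof.
move=> pd qd ep; have [p0 _] := pd; have [q0 _] := qd.
set d := fun a => ln (q a) - ln (p a).
have -> : KL p q = \sum_a p a * (- d a).
  by apply: eq_bigr => a _; rewrite ln_div ?posrE // /d opprB.
have : \sum_a p a * `|d a| = \sum_a p a * (- d a) + 2 * \sum_(a | 0 < d a) p a * d a.
  rewrite mulr_sumr (big_mkcond (fun a => 0 < d a)) -big_split /=.
  apply: eq_bigr => a _; case: ifP => [d0|].
    by rewrite gtr0_norm //; ring.
  by move/negbT; rewrite -leNgt => d0; rewrite ler0_norm //; ring.
have : \sum_(a | 0 < d a) p a * d a <= expR (-1).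
  by rewrite (eq_bigl (fun a => ln (p a) < ln (q a))) ?sum_lnB_pos_le // => a; rewrite /d subr_gt0.
have : eps * \sum_a `|d a| <= \sum_a p a * `|d a|.
  by rewrite mulr_sumr; apply: ler_sum => a _; rewrite ler_wpM2r.
lra.
Qed.

Lemma sum_le_card_bigmax (F : A -> R) : \sum_a F a <= #|A|%:R * \big[Num.max/0]_a F a.
Proof.
apply: (@le_trans _ _ (\sum_(a : A) \big[Num.max/0]_b F b)).
  by apply: ler_sum => a _; exact: le_bigmax.
by rewrite sumr_const mulr_natl.
Qed.

Lemma Lmax_ge P a b : `|P a b| <= Lmax P.
Proof. exact: le_trans (le_bigmax _ (fun b => `|P a b|) b) (le_bigmax _ _ a). Qed.

Lemma matvecB_norm_le P v w a :
  `|matvec P v a - matvec P w a| <= Lmax P * \sum_b `|v b - w b|.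
Proof.
rewrite /matvec -sumrB mulr_sumr; apply: le_trans (ler_norm_sum _ _ _) _.
by apply: ler_sum => b _; rewrite -mulrBr normrM ler_wpM2r ?Lmax_ge.
Qed.

Lemma matvec_norm_le P v a : in_simplex v -> `|matvec P v a| <= Lmax P.
Proof.
move=> [v0 v1]; apply: le_trans (ler_norm_sum _ _ _) _.
rewrite -[Lmax P]mulr1 -v1 mulr_sumr; apply: ler_sum => b _.
by rewrite normrM (ger0_norm (v0 b)) ler_wpM2r ?Lmax_ge.
Qed.

Lemma sum_mul_expR_ge ph g x : pos_dist ph -> (forall a, `|g a| <= x) ->
  expR (- x) <= \sum_a ph a * expR (g a).
Proof.
move=> [ph0 ph1] gx; rewrite -[expR _]mul1r -ph1 mulr_suml.
apply: ler_sum => a _; rewrite ler_pM2l // ler_expR.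
by have := gx a; rewrite ler_norml => /andP[].
Qed.

(* With [Z] the normaliser, [Z (ph_a - ph'_a) = ph_a ((Z - 1) - (e^(g_a) - 1))]
   and [|Z - 1| <= sum_b ph_b |e^(g_b) - 1|]. *)
Lemma mulr_l1_normalize_expR_le ph g : pos_dist ph ->
  0 < \sum_b ph b * expR (g b) ->
  (\sum_b ph b * expR (g b)) *
    \sum_a `|ph a - normalize (fun b => ph b * expR (g b)) a|
  <= 2 * \sum_a ph a * `|expR (g a) - 1|.
Proof.
move=> [ph0 ph1]; rewrite /normalize; set Z := \sum_b _ => Z0.
set S := \sum_a _ * _.
have Z1 : `|Z - 1| <= S.
  have -> : Z - 1 = \sum_b ph b * (expR (g b) - 1).
    by rewrite -[X in _ - X = _]ph1 /Z -sumrB; apply: eq_bigr => b _; ring.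
  apply: le_trans (ler_norm_sum _ _ _) _; apply: ler_sum => b _.
  by rewrite normrM ger0_norm // ltW.
rewrite mulr_sumr; apply: (@le_trans _ _ (\sum_a (ph a * `|expR (g a) - 1| + ph a * S))).
  apply: ler_sum => a _.
  have -> : Z * `|ph a - ph a * expR (g a) / Z| = ph a * `|(Z - 1) - (expR (g a) - 1)|.
    have E : Z * (ph a - ph a * expR (g a) / Z) = ph a * ((Z - 1) - (expR (g a) - 1)).
      by field; rewrite gt_eqF.
    by rewrite -[Z in Z * _](ger0_norm (ltW Z0)) -normrM E normrM ger0_norm // ltW.
  rewrite -mulrDr; apply: ler_wpM2l; first exact: ltW.
  apply: le_trans (ler_normB _ _) _; lra.
by rewrite big_split /= -mulr_suml ph1 mul1r /S; lra.
Qed.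

Lemma l1_normalize_expR_le ph g x : pos_dist ph -> (forall a, `|g a| <= x) ->
  x * \sum_a `|ph a - normalize (fun b => ph b * expR (g b)) a|
  <= 2 * expR x * (expR x - 1) * \sum_a ph a * `|g a|.
Proof.
move=> phd gx; have [ph0 _] := phd; have x0 a : 0 <= x := le_trans (normr_ge0 _) (gx a).
set D : R := \sum_a `|_|; set Z : R := \sum_b ph b * expR (g b).
have ZE : 1 <= Z * expR x.
  have := ler_wpM2r (expR_ge0 x) (sum_mul_expR_ge phd gx).
  by rewrite -expRD addNr expR0.
have Z0 : 0 < Z := lt_le_trans (expR_gt0 _) (sum_mul_expR_ge phd gx).
have ZD := mulr_l1_normalize_expR_le phd Z0.
have xS : x * \sum_a ph a * `|expR (g a) - 1| <= (expR x - 1) * \sum_a ph a * `|g a|.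
  rewrite !mulr_sumr; apply: ler_sum => a _.
  rewrite mulrCA [(expR x - 1) * _]mulrCA; apply: ler_wpM2l; first exact: ltW.
  exact: mulr_norm_expRB1_le.
case: (pickP (@predT A)) => [a _ | A0]; last first.
  by rewrite /D big_pred0 // mulr0 big_pred0 // mulr0.
have x0' := x0 a; have D0 : 0 <= D by apply: sumr_ge0.
have DS : D <= 2 * expR x * \sum_a ph a * `|expR (g a) - 1|.
  apply: le_trans (ler_peMr D0 ZE) _.
  have -> : D * (Z * expR x) = expR x * (Z * D) by ring.
  by apply: le_trans (ler_wpM2l (expR_ge0 x) ZD) _; rewrite mulrCA mulrA.
apply: le_trans (ler_wpM2l x0' DS) _.
by rewrite mulrCA -!mulrA ler_wpM2l ?ler0n // ler_wpM2l ?expR_ge0.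
Qed.

Lemma mwu_step_gap_le eta P ph pi a : 0 < eta -> pos_dist ph -> in_simplex pi ->
  `|eta * matvec P ph a - eta * matvec P (mwu_step eta P ph pi) a|
  <= 2 * expR (eta * Lmax P) * (expR (eta * Lmax P) - 1)
     * \sum_b ph b * `|eta * matvec P pi b|.
Proof.
move=> eta0 phd pid; apply: le_trans (l1_normalize_expR_le phd _); last first.
  move=> b; rewrite normrM gtr0_norm //; apply: ler_wpM2l; first exact: ltW.
  exact: matvec_norm_le.
rewrite -mulrBr normrM gtr0_norm // -mulrA; apply: ler_wpM2l; first exact: ltW.
exact: matvecB_norm_le.
Qed.

Lemma KL_le_Theta eta P p1 pistar t :
  pos_dist (pihat eta P p1 t) -> pos_dist (piseq eta P p1 t.-1) ->
  KL pistar (pihat eta P p1 t) <= Theta eta P p1 pistar t.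
Proof.
move=> hat_pos pi_pos; rewrite /Theta lerDl.
apply: mulr_ge0; last exact: KL_ge0.
by rewrite mulr_ge0 ?sqr_ge0 // mulr_ge0 ?sqr_ge0.
Qed.

Lemma sum_mul_ge_neg (w u : A -> R) B U eps : 0 < eps -> 0 <= U ->
  (forall a, `|u a| <= U) -> eps * \sum_a `|w a| <= B ->
  - (B / eps * U) <= \sum_a w a * u a.
Proof.
move=> eps0 U0 uU wB.
have W : \sum_a `|w a| <= B / eps by rewrite ler_pdivlMr // mulrC.
apply: (@le_trans _ _ (- (\sum_a `|w a| * U))).
  by rewrite lerN2 -mulr_suml; apply: ler_wpM2r.
rewrite -sumrN; apply: ler_sum => a _.
have : `|w a * u a| <= `|w a| * U by rewrite normrM ler_wpM2l.
by rewrite ler_norml => /andP[].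
Qed.

End Distributions.

Theorem mainTheorem18 (R : realType) (A : finType) (P : A -> A -> R)
  (eta : R) (pihat1 pistar : A -> R) :
  skew_sym P ->
  full_support P ->
  0 < eta ->
  eta * Lmax P < 1 / 2 ->
  in_simplex pihat1 -> (forall a, 0 < pihat1 a) ->
  is_KL_proj P pihat1 pistar ->
  forall t : nat, (1 <= t)%N ->
  \sum_(a : A)
     (ln (pihat eta P pihat1 t.+1 a) - ln (pistar a)) *
     (eta * matvec P (pihat eta P pihat1 t) a
      - eta * matvec P (pihat eta P pihat1 t.+1) a)
  >= - ((expR (2 * eta * Lmax P) - 1) * (expR (eta * Lmax P) + 1)
         / (2 * min_entry pistar))
     * #|A|%:R
     * (Theta eta P pihat1 pistar t.+1 + 2 * expR (-1))
     * Khat_succ eta P pihat1 t.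
Proof.
move=> _ fs eta0 _ [_ sum1] pos1 proj [//|t] _.
have [a0 _|A0] := pickP (@predT A); last first.
  by move: sum1; rewrite big_pred0 // => /eqP; rewrite eq_sym oner_eq0.
have state_pos := omwu_state_pos_dist a0 eta P _ (conj pos1 sum1).
have hat_pos : pos_dist (pihat eta P pihat1 t.+1) := (state_pos t).1.
have hat'_pos : pos_dist (pihat eta P pihat1 t.+2) := (state_pos t.+1).1.
have pi_pos : pos_dist (piseq eta P pihat1 t.+1) := (state_pos t.+1).2.
have star_dist : pos_dist pistar.
  by split; [exact: KL_proj_pos pos1 fs proj | case: proj => [[[]]]].
have eps_pos : 0 < min_entry pistar by apply: lt_bigmin => // a _; case: star_dist.
rewrite -[2 * eta * _]mulrA; set x := eta * Lmax P.
set c := (expR (2 * x) - 1) * (expR x + 1).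
have x0 : 0 <= x by apply: mulr_ge0; [exact: ltW | exact: bigmax_ge_id].
have gap a : `|eta * matvec P (pihat eta P pihat1 t.+1) a
               - eta * matvec P (pihat eta P pihat1 t.+2) a|
             <= c / 2 * (#|A|%:R * Khat_succ eta P pihat1 t.+1).
  rewrite pihat_succE; apply: le_trans (mwu_step_gap_le _ _ eta0 hat_pos _) _.
    exact: pos_dist_simplex.
  apply: ler_pM (expR_gap_le x0) (sum_le_card_bigmax _).
  - by rewrite !mulr_ge0 ?expR_ge0 // subr_ge0 -expR0 ler_expR.
  - by apply: sumr_ge0 => b _; rewrite mulr_ge0 // ltW // hat_pos.1.
have eps_le a : min_entry pistar <= pistar a by exact: bigmin_le.
have logs := sum_norm_lnB_le_KL star_dist hat'_pos eps_le.
have := sum_mul_ge_neg eps_pos (le_trans (normr_ge0 _) (gap a0)) gap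
  (le_trans logs (lerD (KL_le_Theta _ hat'_pos pi_pos) (lexx _))).
by congr (_ <= _); rewrite /c; field; rewrite gt_eqF.
Qed.
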